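(* Let $\alpha>0$, $\beta>0$, $\gamma>0$ and suppose that ${}_1F_2\left(\alpha\,;\beta,\gamma\,;-\frac{x^2}{4}\right)\ge0$ for all $x\in\mathbb{R}$. If $p\ge2$ and $0<a_j<b_j$ for $j=1,\dots,p-1$, then $$\Phi(x)={}_pF_{p+1}\left(\begin{array}{c}\alpha,\,a_1,\dots,a_{p-1}\\ \beta,\,\gamma,\,b_1,\dots,b_{p-1}\end{array}\biggl|\,-\frac{x^2}{4}\right)>0\quad\text{for all } x>0.$$
   Context: Generalized hypergeometric functions are defined by ${}_pF_{q}\left(\begin{array}{c}\alpha_1,\dots,\alpha_p\\ \beta_1,\dots,\beta_q\end{array}\big|\, z\right)=\sum_{k=0}^\infty\frac{(\alpha_1)_k\cdots(\alpha_p)_k}{k!\,(\beta_1)_k\cdots(\beta_q)_k}z^k$, where $(\alpha)_k=\Gamma(\alpha+k)/\Gamma(\alpha)$; in particular ${}_1F_2\left(a\,;b,c\,;z\right)$ has upper parameter $a$ and lower parameters $b,c$. *)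

From Stdlib Require Import Reals List.
From Coquelicot Require Import Coquelicot.
Open Scope R_scope.

Fixpoint poch (a : R) (k : nat) : R :=
  match k with
  | O => 1
  | S k' => poch a k' * (a + INR k')
  end.

Definition poch_prod (l : list R) (k : nat) : R :=
  fold_right (fun c acc => poch c k * acc) 1 l.

Definition hyp_term (A B : list R) (z : R) (k : nat) : R :=
  poch_prod A k / (INR (Factorial.fact k) * poch_prod B k) * z ^ k.

Definition hypergeom (A B : list R) (z : R) : R :=
  Series (hyp_term A B z).

From Stdlib Require Import Reals List Lra Lia.
From Coquelicot Require Import Coquelicot.
Import ListNotations.
Open Scope R_scope.

(* Call a multiplier sequence [mu] nonnegativity (positivity) preserving if for
   every entire [G = sum g_k z^k] with [G(0) = 1] and [G >= 0] on [(-oo, 0]] the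
   series [sum g_k mu_k z^k] is again [>= 0] ([> 0]) there; both classes are closed
   under termwise products.  The multiplier [c/(c+k)] is positivity preserving:
   the new series [H] solves [c H + z H' = c G], so [w^c H(-w)] is nondecreasing
   for [w > 0], and it is positive near [0].  Hence so is the convex combination
   [a(b+k)/(b(a+k)) = a/b + (1 - a/b) a/(a+k)] when [0 < a < b].  Finite products
   of these converge to [(a)_k/(b)_k] with a geometric error bound, which makes
   [(a)_k/(b)_k] nonnegativity preserving; writing it as
   [(a+1)_k/(b+1)_k * a(b+k)/(b(a+k))] makes it positivity preserving.  The
   theorem applies the product of the multipliers [(a_j)_k/(b_j)_k] to the
   coefficients of [G = 1F2(alpha; beta, gamma; z)] at [z = -x^2/4]. *)

(** * Multiplier sequences *)

Definition entire (g : nat -> R) : Prop := forall r, CV_disk g r.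

Definition hadamard (g mu : nat -> R) (k : nat) : R := g k * mu k.

Definition nonneg_on_nonpos (g : nat -> R) : Prop :=
  forall z, z <= 0 -> 0 <= PSeries g z.

Definition admissible (g : nat -> R) : Prop :=
  entire g /\ g O = 1 /\ nonneg_on_nonpos g.

Definition multiplier (mu : nat -> R) : Prop :=
  mu O = 1 /\ forall k, Rabs (mu k) <= 1.

Definition nonneg_preserving (mu : nat -> R) : Prop :=
  multiplier mu /\ forall g, admissible g -> nonneg_on_nonpos (hadamard g mu).

Definition pos_preserving (mu : nat -> R) : Prop :=
  multiplier mu /\
  forall g, admissible g -> forall z, z <= 0 -> 0 < PSeries (hadamard g mu) z.

Lemma entire_CV_radius g : entire g -> CV_radius g = p_infty.
Proof.
  intros Hg; apply is_lub_Rbar_unique; split.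
  - intros x _; exact I.
  - intros [l| |] Hl; simpl; auto.
    + specialize (Hl (l + 1) (Hg (l + 1))); simpl in Hl; lra.
    + exact (Hl 0 (Hg 0)).
Qed.

Lemma entire_CV_radius_gt g x : entire g -> Rbar_lt (Rabs x) (CV_radius g).
Proof. intros Hg; rewrite (entire_CV_radius g Hg); exact I. Qed.

Lemma entire_hadamard g mu :
  entire g -> (forall k, Rabs (mu k) <= 1) -> entire (hadamard g mu).
Proof.
  intros Hg Hmu r.
  apply (@ex_series_le R_AbsRing R_CompleteNormedModule _
           (fun k => Rabs (g k * r ^ k))); [|apply Hg].
  intros k; change norm with Rabs; simpl.
  rewrite Rabs_Rabsolu; unfold hadamard.
  replace (g k * mu k * r ^ k) with ((g k * r ^ k) * mu k) by ring.
  rewrite Rabs_mult; specialize (Hmu k).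
  pose proof (Rabs_pos (g k * r ^ k)); nra.
Qed.

Lemma entire_abs g : entire g -> entire (fun k => Rabs (g k)).
Proof.
  intros Hg r; eapply ex_series_ext; [|apply (Hg r)].
  intros k; simpl; rewrite !Rabs_mult, Rabs_Rabsolu; reflexivity.
Qed.

Lemma entire_ex_series g z : entire g -> ex_series (fun k => g k * z ^ k).
Proof. intros Hg; apply ex_series_Rabs, (Hg z). Qed.

Lemma hadamard_assoc g mu nu k :
  hadamard (hadamard g mu) nu k = hadamard g (fun k => mu k * nu k) k.
Proof. unfold hadamard; ring. Qed.

Lemma multiplier_mul mu nu :
  multiplier mu -> multiplier nu -> multiplier (fun k => mu k * nu k).
Proof.
  intros [Hmu0 Hmu] [Hnu0 Hnu]; split.
  - rewrite Hmu0, Hnu0; ring.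
  - intros k; rewrite Rabs_mult.
    specialize (Hmu k); specialize (Hnu k).
    pose proof (Rabs_pos (mu k)); pose proof (Rabs_pos (nu k)); nra.
Qed.

Lemma admissible_hadamard g mu :
  admissible g -> nonneg_preserving mu -> admissible (hadamard g mu).
Proof.
  intros Hg Hmu; pose proof Hg as [Hg_ent [Hg0 _]].
  destruct Hmu as [[Hmu0 Hmu_le] Hmu].
  split; [|split].
  - apply entire_hadamard; assumption.
  - unfold hadamard; rewrite Hg0, Hmu0; ring.
  - apply Hmu, Hg.
Qed.

Lemma pos_preserving_nonneg mu : pos_preserving mu -> nonneg_preserving mu.
Proof.
  intros [Hmu Hpos]; split; [assumption|].
  intros g Hg z Hz; apply Rlt_le, Hpos; assumption.
Qed.

Lemma nonneg_preserving_1 : nonneg_preserving (fun _ => 1).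
Proof.
  split; [split; [reflexivity|intros; rewrite Rabs_R1; lra]|].
  intros g [_ [_ Hg]] z Hz.
  rewrite (PSeries_ext _ g); [apply Hg, Hz|].
  intros k; unfold hadamard; ring.
Qed.

Lemma nonneg_preserving_mul mu nu :
  nonneg_preserving mu -> nonneg_preserving nu ->
  nonneg_preserving (fun k => mu k * nu k).
Proof.
  intros Hmu Hnu; split.
  - apply multiplier_mul; [apply Hmu|apply Hnu].
  - intros g Hg z Hz.
    rewrite <- (PSeries_ext _ _ z (hadamard_assoc g mu nu)).
    apply Hnu; [apply admissible_hadamard|]; assumption.
Qed.

Lemma pos_preserving_mul mu nu :
  nonneg_preserving mu -> pos_preserving nu ->
  pos_preserving (fun k => mu k * nu k).
Proof.
  intros Hmu Hnu; split.
  - apply multiplier_mul; [apply Hmu|apply Hnu].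
  - intros g Hg z Hz.
    rewrite <- (PSeries_ext _ _ z (hadamard_assoc g mu nu)).
    apply Hnu; [apply admissible_hadamard|]; assumption.
Qed.

Lemma nonneg_preserving_ext mu nu :
  (forall k, mu k = nu k) -> nonneg_preserving mu -> nonneg_preserving nu.
Proof.
  intros E [[Hmu0 Hmu] Hpres]; split; [split|].
  - rewrite <- E; assumption.
  - intros k; rewrite <- E; apply Hmu.
  - intros g Hg z Hz.
    rewrite (PSeries_ext _ (hadamard g mu)); [apply Hpres; assumption|].
    intros k; unfold hadamard; rewrite E; reflexivity.
Qed.

Lemma pos_preserving_ext mu nu :
  (forall k, mu k = nu k) -> pos_preserving mu -> pos_preserving nu.
Proof.
  intros E [[Hmu0 Hmu] Hpres]; split; [split|].
  - rewrite <- E; assumption.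
  - intros k; rewrite <- E; apply Hmu.
  - intros g Hg z Hz.
    rewrite (PSeries_ext _ (hadamard g mu)); [apply Hpres; assumption|].
    intros k; unfold hadamard; rewrite E; reflexivity.
Qed.

Lemma PSeries_hadamard_sub_le g mu nu r z : entire g ->
  (forall k, Rabs (mu k) <= 1) -> (forall k, Rabs (nu k) <= 1) ->
  (forall k, Rabs (nu k - mu k) <= r ^ k - 1) ->
  Rabs (PSeries (hadamard g nu) z - PSeries (hadamard g mu) z) <=
  PSeries (fun k => Rabs (g k)) (r * Rabs z)
  - PSeries (fun k => Rabs (g k)) (Rabs z).
Proof.
  intros Hg Hmu Hnu Hd.
  set (e := fun k => Rabs (g k) * (r * Rabs z) ^ k - Rabs (g k) * Rabs z ^ k).
  assert (He : forall k, Rabs (g k * (nu k - mu k) * z ^ k) <= e k).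
  { intros k; unfold e; rewrite !Rabs_mult, Rpow_mult_distr, <- RPow_abs.
    specialize (Hd k); pose proof (Rabs_pos (g k)).
    pose proof (pow_le (Rabs z) k (Rabs_pos z)).
    assert (0 <= Rabs (g k) * Rabs z ^ k * (r ^ k - 1 - Rabs (nu k - mu k)))
      by (apply Rmult_le_pos; [apply Rmult_le_pos|]; lra).
    nra. }
  assert (Hex_e : ex_series e).
  { apply (ex_series_ext (fun k => plus (Rabs (g k) * (r * Rabs z) ^ k)
                                      (opp (Rabs (g k) * Rabs z ^ k))));
      [reflexivity|].
    apply (@ex_series_minus R_AbsRing R_NormedModule);
      apply entire_ex_series, entire_abs, Hg. }
  unfold PSeries; rewrite <- !Series_minus;
    try (apply entire_ex_series; try apply entire_abs;
         try apply entire_hadamard; assumption).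
  rewrite (Series_ext _ (fun k => g k * (nu k - mu k) * z ^ k))
    by (intros k; unfold hadamard; ring).
  eapply Rle_trans; [apply Series_Rabs|apply Series_le]; try assumption.
  - apply (@ex_series_le R_AbsRing R_CompleteNormedModule _ e); [|assumption].
    intros k; change norm with Rabs; simpl; rewrite Rabs_Rabsolu; apply He.
  - intros k; split; [apply Rabs_pos|apply He].
Qed.

(* Continuity of [x |-> sum |g k| x^k] at [|z|] makes the error bound
   [rho n ^ k - 1] negligible in the limit. *)
Lemma nonneg_preserving_limit mu (nu : nat -> nat -> R) (rho : nat -> R) :
  multiplier mu -> (forall n, nonneg_preserving (nu n)) -> is_lim_seq rho 1 ->
  (forall n k, Rabs (nu n k - mu k) <= rho n ^ k - 1) -> nonneg_preserving mu.
Proof.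
  intros Hmu Hnu Hrho Hd; split; [assumption|].
  intros g Hg z Hz; pose proof Hg as [Hg_ent _].
  set (A := PSeries (fun k => Rabs (g k))).
  assert (Hbound : forall n,
             0 <= PSeries (hadamard g mu) z + (A (rho n * Rabs z) - A (Rabs z))).
  { intros n; destruct (Hnu n) as [[_ Hnu_le] Hnu_pres].
    pose proof (PSeries_hadamard_sub_le g mu (nu n) (rho n) z Hg_ent
                  (proj2 Hmu) Hnu_le (Hd n)) as Hsub.
    specialize (Hnu_pres g Hg z Hz).
    apply Rabs_le_between in Hsub; fold A in Hsub; lra. }
  assert (Hlim_arg : is_lim_seq (fun n => rho n * Rabs z) (Rabs z)).
  { replace (Finite (Rabs z)) with (Rbar_mult 1 (Rabs z))
      by (simpl; f_equal; ring).
    apply is_lim_seq_scal_r, Hrho. }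
  assert (Hlim : is_lim_seq
                   (fun n => PSeries (hadamard g mu) z
                             + (A (rho n * Rabs z) - A (Rabs z)))
                   (PSeries (hadamard g mu) z)).
  { replace (Finite (PSeries (hadamard g mu) z)) with
      (Finite (PSeries (hadamard g mu) z + (A (Rabs z) - A (Rabs z))))
      by (f_equal; ring).
    apply is_lim_seq_plus'; [apply is_lim_seq_const|].
    apply is_lim_seq_minus'; [|apply is_lim_seq_const].
    apply is_lim_seq_continuous; [|assumption].
    apply PSeries_continuity, entire_CV_radius_gt, entire_abs, Hg_ent. }
  exact (is_lim_seq_le _ _ _ _ Hbound (is_lim_seq_const 0) Hlim).
Qed.

(** * The averaging multiplier [c/(c+k)] *)

(* Multiplying the coefficients by [c/(c+k)] turns [G] into
   [H(-w) = c w^(-c) int_0^w t^(c-1) G(-t) dt] for [w > 0]. *)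
Definition averaging (c : R) (k : nat) : R := c / (c + INR k).

Lemma averaging_bounds c k : 0 < c -> 0 < averaging c k <= 1.
Proof.
  intros Hc; pose proof (pos_INR k); unfold averaging; split.
  - apply Rdiv_lt_0_compat; lra.
  - apply Rmult_le_reg_r with (c + INR k); [lra|].
    field_simplify; lra.
Qed.

Lemma multiplier_averaging c : 0 < c -> multiplier (averaging c).
Proof.
  intros Hc; split.
  - unfold averaging; simpl; field; lra.
  - intros k; destruct (averaging_bounds c k Hc).
    rewrite Rabs_right; lra.
Qed.

Section Averaging.

Variables (c : R) (g : nat -> R).
Hypotheses (Hc : 0 < c) (Hg : entire g).

Let h := hadamard g (averaging c).

Lemma entire_averaging : entire h.
Proof.
  apply entire_hadamard; [assumption|apply multiplier_averaging, Hc].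
Qed.

Lemma averaging_ode x :
  c * PSeries h x + x * PSeries (PS_derive h) x = c * PSeries g x.
Proof.
  pose proof entire_averaging as Hh.
  rewrite <- PSeries_incr_1, <- (PSeries_scal c h), <- PSeries_plus,
    <- PSeries_scal.
  - apply PSeries_ext; intros [|k];
      unfold PS_plus, PS_scal, PS_incr_1, PS_derive, h, hadamard, averaging;
      change plus with Rplus; change scal with Rmult; change mult with Rmult.
    + change zero with 0; simpl; field; lra.
    + pose proof (pos_INR (S k)); field; lra.
  - apply CV_radius_inside; rewrite CV_radius_scal, (entire_CV_radius _ Hh);
      [exact I|lra].
  - apply CV_radius_inside;
      rewrite CV_radius_incr_1, CV_radius_derive, (entire_CV_radius _ Hh).
    exact I.
Qed.

Lemma averaging_is_derive w : 0 < w ->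
  is_derive (fun t => Rpower t c * PSeries h (- t)) w
    (Rpower w (c - 1) * (c * PSeries g (- w))).
Proof.
  intros Hw.
  assert (D_pow : is_derive (fun t => Rpower t c) w (c * Rpower w (c - 1))).
  { apply is_derive_Reals, derivable_pt_lim_power, Hw. }
  assert (D_H : is_derive (fun t => PSeries h (- t)) w
                  (scal (-1) (PSeries (PS_derive h) (- w)))).
  { apply (is_derive_comp (PSeries h) (fun t => - t)).
    - apply is_derive_PSeries, entire_CV_radius_gt, entire_averaging.
    - auto_derive; [exact I|ring]. }
  assert (E_pow : Rpower w c = Rpower w (c - 1) * w).
  { rewrite <- (Rpower_1 w Hw) at 3; rewrite <- Rpower_plus; f_equal; ring. }
  pose proof (is_derive_mult _ _ _ _ _ D_pow D_H
                (fun _ _ => Rmult_comm _ _)) as D.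
  replace (Rpower w (c - 1) * (c * PSeries g (- w))) with
    (c * Rpower w (c - 1) * PSeries h (- w)
     + Rpower w c * (-1 * PSeries (PS_derive h) (- w))); [exact D|].
  rewrite <- (averaging_ode (- w)), E_pow; ring.
Qed.

End Averaging.

Lemma continuity_pt_pos_near f x : continuity_pt f x -> 0 < f x ->
  exists eta, 0 < eta /\ forall y, Rabs (y - x) < eta -> 0 < f y.
Proof.
  intros Hf Hpos.
  destruct (proj1 (continuity_pt_locally f x) Hf (mkposreal _ Hpos)) as [eta Heta].
  exists eta; split; [apply cond_pos|].
  intros y Hy; specialize (Heta y Hy); simpl in Heta.
  apply Rabs_def2 in Heta; lra.
Qed.

Lemma pos_preserving_averaging c : 0 < c -> pos_preserving (averaging c).
Proof.
  intros Hc; split; [apply multiplier_averaging, Hc|].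
  intros g [Hg [Hg0 HG]] z Hz.
  set (h := hadamard g (averaging c)).
  set (K := fun w => Rpower w c * PSeries h (- w)).
  assert (H0 : 0 < PSeries h 0).
  { rewrite PSeries_0; unfold h, hadamard, averaging; rewrite Hg0; simpl.
    replace (c / (c + 0)) with 1 by (field; lra); lra. }
  destruct (continuity_pt_pos_near (PSeries h) 0) as [eta [Heta Hnear]];
    [apply PSeries_continuity, entire_CV_radius_gt, entire_averaging; assumption
    |exact H0|].
  assert (Hsmall : forall w, 0 <= w < eta -> 0 < PSeries h (- w)).
  { intros w Hw; apply Hnear; rewrite Rminus_0_r, Rabs_Ropp, Rabs_right; lra. }
  replace z with (- (- z)) by ring.
  destruct (Rlt_le_dec (- z) eta) as [Hlt|Hge]; [apply Hsmall; lra|].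
  set (v := - z); set (w0 := eta / 2).
  destruct (MVT_cor2 K (fun w => Rpower w (c - 1) * (c * PSeries g (- w))) w0 v)
    as [xi [HK Hxi]]; [unfold w0, v in *; lra| |].
  { intros t Ht; apply is_derive_Reals, averaging_is_derive; try assumption.
    unfold w0 in Ht; lra. }
  assert (K_w0 : 0 < K w0).
  { apply Rmult_lt_0_compat; [apply exp_pos|apply Hsmall; unfold w0; lra]. }
  assert (K'_xi : 0 <= Rpower xi (c - 1) * (c * PSeries g (- xi))).
  { apply Rmult_le_pos; [apply Rlt_le, exp_pos|].
    apply Rmult_le_pos; [lra|apply HG; unfold w0 in Hxi; lra]. }
  assert (Hvw0 : 0 < v - w0) by (unfold w0, v in *; lra).
  assert (K_v : 0 < K v) by nra.
  apply (Rmult_lt_reg_l (Rpower v c)); [apply exp_pos|].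
  rewrite Rmult_0_r; exact K_v.
Qed.

(** * Quotients of Pochhammer symbols *)

Lemma poch_pos x k : 0 < x -> 0 < poch x k.
Proof.
  intros Hx; induction k as [|k IH]; simpl; [lra|].
  pose proof (pos_INR k); apply Rmult_lt_0_compat; lra.
Qed.

Lemma poch_shift x k : poch x k * (x + INR k) = x * poch (x + 1) k.
Proof.
  induction k as [|k IH]; simpl poch; [simpl; ring|].
  rewrite S_INR.
  transitivity (poch x k * (x + INR k) * (x + INR k + 1)); [ring|].
  rewrite IH; ring.
Qed.

Definition poch_quot (a b : R) (k : nat) : R := poch a k / poch b k.

Lemma poch_quot_ge1 a b k : 0 < a < b ->
  1 <= poch_quot b a k <= (b / a) ^ k.
Proof.
  intros Hab; unfold poch_quot; induction k as [|k IH]; simpl; [lra|].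
  pose proof (pos_INR k).
  pose proof (poch_pos a k ltac:(lra)); pose proof (poch_pos b k ltac:(lra)).
  replace (poch b k * (b + INR k) / (poch a k * (a + INR k))) with
    (poch b k / poch a k * ((b + INR k) / (a + INR k))) by (field; lra).
  assert (1 <= (b + INR k) / (a + INR k) <= b / a).
  { split; apply Rmult_le_reg_r with (a + INR k); try lra;
      [|apply Rmult_le_reg_r with a; [lra|]]; field_simplify; nra. }
  assert (0 <= (b / a) ^ k) by (apply pow_le, Rlt_le, Rdiv_lt_0_compat; lra).
  split; [nra|].
  rewrite (Rmult_comm (b / a)); apply Rmult_le_compat; lra.
Qed.

Lemma poch_quot_le1 a b k : 0 < a < b -> 0 < poch_quot a b k <= 1.
Proof.
  intros Hab; destruct (poch_quot_ge1 a b k Hab) as [H1 _].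
  unfold poch_quot in *.
  pose proof (poch_pos a k ltac:(lra)); pose proof (poch_pos b k ltac:(lra)).
  split; [apply Rdiv_lt_0_compat; lra|].
  replace (poch a k / poch b k) with (/ (poch b k / poch a k)) by (field; lra).
  rewrite <- Rinv_1; apply Rinv_le_contravar; lra.
Qed.

Definition poch_step (a b : R) (k : nat) : R := a * (b + INR k) / (b * (a + INR k)).

Lemma poch_quot_succ a b k : 0 < a -> 0 < b ->
  poch_quot (a + 1) (b + 1) k = poch_quot a b k * poch_step b a k.
Proof.
  intros Ha Hb; unfold poch_quot, poch_step; pose proof (pos_INR k).
  pose proof (poch_pos b k Hb).
  replace (poch (a + 1) k) with (poch a k * (a + INR k) / a)
    by (rewrite poch_shift; field; lra).
  replace (poch (b + 1) k) with (poch b k * (b + INR k) / b)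
    by (rewrite poch_shift; field; lra).
  field; repeat split; lra.
Qed.

Lemma pos_preserving_poch_step a b : 0 < a < b -> pos_preserving (poch_step a b).
Proof.
  intros Hab; set (l := a / b).
  assert (Hl : 0 < l < 1).
  { unfold l; split; [apply Rdiv_lt_0_compat; lra|].
    apply Rmult_lt_reg_r with b; [lra|]; field_simplify; lra. }
  assert (E : forall k, poch_step a b k = l + (1 - l) * averaging a k).
  { intros k; pose proof (pos_INR k); unfold poch_step, averaging, l; field; lra. }
  destruct (pos_preserving_averaging a) as [_ Havg]; [lra|].
  split; [split|].
  - rewrite E; unfold averaging; simpl; field; lra.
  - intros k; rewrite E; destruct (averaging_bounds a k) as [H0 H1]; [lra|].
    rewrite Rabs_right; nra.
  - intros g Hg z Hz; pose proof Hg as [Hg_ent [_ HG]].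
    assert (Hh : entire (hadamard g (averaging a))).
    { apply entire_hadamard; [assumption|apply multiplier_averaging; lra]. }
    unfold PSeries.
    rewrite (Series_ext _ (fun k => l * (g k * z ^ k)
                          + (1 - l) * (hadamard g (averaging a) k * z ^ k))).
    2: { intros k; unfold hadamard; rewrite E; ring. }
    rewrite Series_plus, !Series_scal_l;
      try (apply (@ex_series_scal_l R_AbsRing R_NormedModule), entire_ex_series;
           assumption).
    specialize (HG z Hz); specialize (Havg g Hg z Hz).
    unfold PSeries in HG, Havg; nra.
Qed.

Lemma is_lim_seq_inv_shift a : 0 < a -> is_lim_seq (fun n => / (a + INR n)) 0.
Proof.
  intros Ha.
  assert (L : is_lim_seq (fun n => a + INR n) p_infty).
  { eapply is_lim_seq_plus; [apply is_lim_seq_const|apply is_lim_seq_INR|].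
    simpl; constructor. }
  exact (is_lim_seq_inv _ _ L ltac:(discriminate)).
Qed.

Lemma is_lim_seq_shift_quot a b : 0 < a ->
  is_lim_seq (fun n => (b + INR n) / (a + INR n)) 1.
Proof.
  intros Ha.
  apply is_lim_seq_ext with (fun n => 1 + (b - a) * / (a + INR n)).
  - intros n; pose proof (pos_INR n); field; lra.
  - replace (Finite 1) with (Finite (1 + (b - a) * 0)) by (f_equal; ring).
    apply is_lim_seq_plus'; [apply is_lim_seq_const|].
    apply is_lim_seq_mult'; [apply is_lim_seq_const|].
    apply is_lim_seq_inv_shift, Ha.
Qed.

Lemma multiplier_poch_quot a b : 0 < a < b -> multiplier (poch_quot a b).
Proof.
  intros Hab; split.
  - unfold poch_quot; simpl; field.
  - intros k; destruct (poch_quot_le1 a b k Hab); rewrite Rabs_right; lra.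
Qed.

(* [nu n = prod_(i < n) poch_step (a + i) (b + i)] tends to [(a)_k/(b)_k]. *)
Lemma nonneg_preserving_poch_quot a b : 0 < a < b ->
  nonneg_preserving (poch_quot a b).
Proof.
  intros Hab.
  set (nu n k := poch_quot a b k * poch_quot (b + INR n) (a + INR n) k).
  apply (nonneg_preserving_limit _ nu (fun n => (b + INR n) / (a + INR n))).
  - apply multiplier_poch_quot, Hab.
  - intros n; induction n as [|n IH].
    + apply (nonneg_preserving_ext (fun _ => 1)); [|apply nonneg_preserving_1].
      intros k; unfold nu, poch_quot; simpl INR; rewrite !Rplus_0_r.
      pose proof (poch_pos a k ltac:(lra)); pose proof (poch_pos b k ltac:(lra)).
      field; lra.
    + apply (nonneg_preserving_ext
               (fun k => nu n k * poch_step (a + INR n) (b + INR n) k)).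
      * intros k; unfold nu; rewrite S_INR, <- !Rplus_assoc, poch_quot_succ;
          [ring| |]; pose proof (pos_INR n); lra.
      * apply nonneg_preserving_mul; [exact IH|].
        apply pos_preserving_nonneg, pos_preserving_poch_step.
        pose proof (pos_INR n); lra.
  - apply is_lim_seq_shift_quot; lra.
  - intros n k; unfold nu; pose proof (pos_INR n).
    destruct (poch_quot_le1 a b k Hab).
    destruct (poch_quot_ge1 (a + INR n) (b + INR n) k) as [Hge1 Hle]; [lra|].
    rewrite Rabs_right; nra.
Qed.

Lemma pos_preserving_poch_quot a b : 0 < a < b -> pos_preserving (poch_quot a b).
Proof.
  intros Hab.
  apply (pos_preserving_ext (fun k => poch_quot (a + 1) (b + 1) k * poch_step a b k)).
  - intros k; rewrite poch_quot_succ by lra; pose proof (pos_INR k).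
    unfold poch_step; field; lra.
  - apply pos_preserving_mul;
      [apply nonneg_preserving_poch_quot|apply pos_preserving_poch_step]; lra.
Qed.

Definition poch_prod_quot (A B : list R) (k : nat) : R :=
  poch_prod A k / poch_prod B k.

Lemma poch_prod_pos_Forall2 A B k :
  Forall2 (fun a b => 0 < a < b) A B -> 0 < poch_prod B k.
Proof.
  induction 1 as [|a b A B Hab _ IH]; simpl; [lra|].
  apply Rmult_lt_0_compat; [apply poch_pos; lra|exact IH].
Qed.

Lemma nonneg_preserving_poch_prod_quot A B :
  Forall2 (fun a b => 0 < a < b) A B -> nonneg_preserving (poch_prod_quot A B).
Proof.
  intros HAB; induction HAB as [|a b A B Hab HAB IH].
  - apply (nonneg_preserving_ext (fun _ => 1)); [|apply nonneg_preserving_1].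
    intros k; unfold poch_prod_quot; simpl; field.
  - apply (nonneg_preserving_ext (fun k => poch_quot a b k * poch_prod_quot A B k)).
    + intros k; unfold poch_prod_quot, poch_quot; simpl.
      pose proof (poch_pos b k ltac:(lra)).
      pose proof (poch_prod_pos_Forall2 A B k HAB).
      field; lra.
    + apply nonneg_preserving_mul; [apply nonneg_preserving_poch_quot, Hab|exact IH].
Qed.

Lemma pos_preserving_poch_prod_quot A B :
  Forall2 (fun a b => 0 < a < b) A B -> A <> [] ->
  pos_preserving (poch_prod_quot A B).
Proof.
  intros [|a b A' B' Hab HAB] HA; [contradiction|].
  apply (pos_preserving_ext (fun k => poch_prod_quot A' B' k * poch_quot a b k)).
  - intros k; unfold poch_prod_quot, poch_quot; simpl.
    pose proof (poch_pos b k ltac:(lra)).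
    pose proof (poch_prod_pos_Forall2 A' B' k HAB).
    field; lra.
  - apply pos_preserving_mul;
      [apply nonneg_preserving_poch_prod_quot, HAB|apply pos_preserving_poch_quot, Hab].
Qed.

Definition hyp_coef (A B : list R) (k : nat) : R :=
  poch_prod A k / (INR (Factorial.fact k) * poch_prod B k).

Lemma hypergeom_PSeries A B z : hypergeom A B z = PSeries (hyp_coef A B) z.
Proof. reflexivity. Qed.

Lemma poch_prod_app A A' k :
  poch_prod (A ++ A') k = poch_prod A k * poch_prod A' k.
Proof.
  induction A as [|a A IH]; simpl; [ring|]; rewrite IH; ring.
Qed.

Lemma hyp_coef_app A B A' B' k :
  poch_prod B k <> 0 -> poch_prod B' k <> 0 ->
  hyp_coef (A ++ A') (B ++ B') k = hadamard (hyp_coef A B) (poch_prod_quot A' B') k.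
Proof.
  intros HB HB'; unfold hyp_coef, hadamard, poch_prod_quot.
  rewrite !poch_prod_app; pose proof (INR_fact_neq_0 k).
  field; repeat split; assumption.
Qed.

Lemma entire_hyp_coef_1F2 a b c : 0 < a -> 0 < b -> 0 < c ->
  entire (hyp_coef [a] [b; c]).
Proof.
  intros Ha Hb Hc r.
  assert (Hpos : forall k, 0 < hyp_coef [a] [b; c] k).
  { intros k; unfold hyp_coef; simpl.
    pose proof (poch_pos a k Ha); pose proof (poch_pos b k Hb).
    pose proof (poch_pos c k Hc); pose proof (INR_fact_lt_0 k).
    apply Rdiv_lt_0_compat; [lra|].
    apply Rmult_lt_0_compat; [assumption|nra]. }
  apply CV_disk_DAlembert with 0; [intros k; specialize (Hpos k); lra| |now left].
  set (C := (1 + a / b) / c).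
  apply is_lim_seq_le_le with (fun _ => 0) (fun n => C * / (1 + INR n)).
  - intros n; pose proof (pos_INR n).
    assert (E : hyp_coef [a] [b; c] (S n) / hyp_coef [a] [b; c] n =
                (a + INR n) / (b + INR n) * / (c + INR n) * / (1 + INR n)).
    { unfold hyp_coef; simpl poch_prod; simpl poch.
      rewrite fact_simpl, mult_INR, S_INR.
      pose proof (poch_pos a n Ha); pose proof (poch_pos b n Hb).
      pose proof (poch_pos c n Hc); pose proof (INR_fact_lt_0 n).
      field; repeat split; lra. }
    rewrite E.
    assert (B1 : 0 <= (a + INR n) / (b + INR n) <= 1 + a / b).
    { split; [apply Rlt_le, Rdiv_lt_0_compat; lra|].
      apply Rmult_le_reg_r with (b + INR n); [lra|].
      apply Rmult_le_reg_r with b; [lra|]; field_simplify; nra. }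
    assert (B2 : 0 <= / (c + INR n) <= / c).
    { split; [apply Rlt_le, Rinv_0_lt_compat; lra|apply Rinv_le_contravar; lra]. }
    assert (B3 : 0 < / (1 + INR n)) by (apply Rinv_0_lt_compat; lra).
    rewrite Rabs_right by (apply Rle_ge, Rmult_le_pos; [apply Rmult_le_pos|]; lra).
    split; [apply Rmult_le_pos; [apply Rmult_le_pos|]; lra|].
    apply Rmult_le_compat_r; [lra|].
    unfold C, Rdiv at 2; apply Rmult_le_compat; lra.
  - apply is_lim_seq_const.
  - replace (Finite 0) with (Finite (C * 0)) by (f_equal; ring).
    apply is_lim_seq_mult'; [apply is_lim_seq_const|].
    apply is_lim_seq_inv_shift; lra.
Qed.

Lemma admissible_hyp_coef_1F2 a b c : 0 < a -> 0 < b -> 0 < c ->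
  (forall x, 0 <= hypergeom [a] [b; c] (- x ^ 2 / 4)) ->
  admissible (hyp_coef [a] [b; c]).
Proof.
  intros Ha Hb Hc Hnonneg; split; [|split].
  - apply entire_hyp_coef_1F2; assumption.
  - unfold hyp_coef; simpl; field.
  - intros z Hz; specialize (Hnonneg (2 * sqrt (- z))).
    replace (- (2 * sqrt (- z)) ^ 2 / 4) with z in Hnonneg; [exact Hnonneg|].
    rewrite Rpow_mult_distr, pow2_sqrt by lra; field.
Qed.

Lemma Forall2_map_in {I T : Type} (P : T -> T -> Prop) (a b : I -> T) (l : list I) :
  (forall j, In j l -> P (a j) (b j)) -> Forall2 P (map a l) (map b l).
Proof.
  induction l as [|j l IH]; intros H; simpl; constructor.
  - apply H; left; reflexivity.
  - apply IH; intros i Hi; apply H; right; exact Hi.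
Qed.

Theorem theorem7 (alpha beta gamma : R) :
  0 < alpha -> 0 < beta -> 0 < gamma ->
  (forall x : R, 0 <= hypergeom (alpha :: nil) (beta :: gamma :: nil) (- x ^ 2 / 4)) ->
  forall (p : nat) (a b : nat -> R),
    (2 <= p)%nat ->
    (forall j : nat, (1 <= j <= p - 1)%nat -> 0 < a j /\ a j < b j) ->
    forall x : R, 0 < x ->
      0 < hypergeom (alpha :: map a (seq 1 (p - 1)))
                    (beta :: gamma :: map b (seq 1 (p - 1))) (- x ^ 2 / 4).
Proof.
  intros Halpha Hbeta Hgamma Hnonneg p a b Hp Hab x Hx.
  set (A := map a (seq 1 (p - 1))); set (B := map b (seq 1 (p - 1))).
  assert (HAB : Forall2 (fun a b => 0 < a < b) A B).
  { apply Forall2_map_in; intros j Hj; apply in_seq in Hj; apply Hab; lia. }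
  assert (HA : A <> []).
  { intros E; apply (f_equal (@length R)) in E.
    unfold A in E; rewrite length_map, length_seq in E; simpl in E; lia. }
  rewrite hypergeom_PSeries,
    (PSeries_ext _ (hadamard (hyp_coef [alpha] [beta; gamma]) (poch_prod_quot A B))).
  - apply (proj2 (pos_preserving_poch_prod_quot A B HAB HA)).
    + apply admissible_hyp_coef_1F2; assumption.
    + pose proof (pow_lt x 2 Hx); lra.
  - intros k; apply (hyp_coef_app [alpha] [beta; gamma]).
    + simpl; pose proof (poch_pos beta k Hbeta); pose proof (poch_pos gamma k Hgamma).
      nra.
    + apply Rgt_not_eq, (poch_prod_pos_Forall2 A), HAB.
Qed.
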